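(* Let $M$ be a Turing machine with bi-infinite tape, tape symbols $\{0,1,3\}$ ($0$ the blank), and states $Q=\{0,1,\dots,|Q|-1\}$, and let $\mathrm{Next}$ map a configuration of $M$ to the next one. There is a function $\overline{\mathrm{Next}}$ in $\mathbb{LDL}^\circ$ such that for every configuration $C$ of $M$ in which all non-blank tape symbols are $1$ or $3$, $\overline{\mathrm{Next}}(\gamma_{config}(C))=\gamma_{config}(\mathrm{Next}(C))$. Moreover $\overline{\mathrm{Next}}$ is essentially linear.
   Context: A configuration with tape $\dots l_{-k}\dots l_{-1}l_0r_0r_1\dots r_n\dots$ and head on $r_0$ is written $C=(q,l,r)$ with $l=l_0l_{-1}l_{-2}\dots$, $r=r_0r_1\dots$ (possibly infinite words) and $q\in Q$ the state. For a word $w=w_0w_1w_2\dots$, $\gamma_{word}(w)=\sum_{i\ge0}w_i4^{-(i+1)}$, and $\gamma_{config}(q,l,r)=(q,\gamma_{word}(l),\gamma_{word}(r))$. $\ell$ is the binary length; $\overline{\mathrm{sg}}:\mathbb R\to\mathbb R$ is a fixed continuous piecewise affine function equal to $1$ for $x>3/4$ and $0$ for $x<1/4$. An $\overline{\mathrm{sg}}$-polynomial expression is built from $+,-,\times,\overline{\mathrm{sg}}$ over variables and integer constants; $\deg(x,x)=1$, $\deg(x,x')=0$ for other variables/constants, $\deg(x,P+Q)=\max$, $\deg(x,P\times Q)=$ sum, $\deg(x,\overline{\mathrm{sg}}(P))=0$. An expression is essentially linear in a vector of variables $\mathbf f$ if it equals $\mathbf A\cdot\mathbf f+\mathbf B$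 with $\mathbf A,\mathbf B$ $\overline{\mathrm{sg}}$-polynomial expressions of degree $0$ in $\mathbf f$. Linear length ODE schema: $\mathbf f(0,\mathbf y)=\mathbf g(\mathbf y)$, $\mathbf f(x+1,\mathbf y)=\mathbf f(x,\mathbf y)+(\ell(x+1)-\ell(x))\,\mathbf u(\mathbf f(x,\mathbf y),\mathbf h(x,\mathbf y),x,\mathbf y)$ with $\mathbf u$ an $\overline{\mathrm{sg}}$-polynomial expression essentially linear in $\mathbf f(x,\mathbf y)$. $\mathbb{LDL}^\circ$: smallest class of functions (with arguments/values in $\mathbb N,\mathbb Z,\mathbb Q,\mathbb R$, composition partial) containing $0,1$, projections, $\ell$, $+,-,\times$ (over the reals), $\overline{\mathrm{sg}}$, $x\mapsto x/2$, closed under composition and linear length ODE.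
   Formalization: The hypothesis on C is that no blank precedes a non-blank symbol in l or in r, and the expressions making $\overline{\mathrm{Next}}$ essentially linear may use halving x ↦ x/2 beyond +, −, ×, $\overline{\mathrm{sg}}$ and integer constants. The paper assumes this as well. *)

From Stdlib Require Import Reals List ZArith Lia.
From Coquelicot Require Import Coquelicot.
Import ListNotations.
Open Scope R_scope.

Inductive sym := B0 | S1 | S3.
Definition symval (s : sym) : R := match s with B0 => 0 | S1 => 1 | S3 => 3 end.

Inductive move := MoveL | MoveR.

Record TM := mkTM {
  nQ : nat;
  delta : nat -> sym -> nat * sym * move;
  delta_ok : forall q s, (q < nQ)%nat -> (fst (fst (delta q s)) < nQ)%nat }.

(* A (possibly infinite) word w_0 w_1 ...; finite words are padded with blanks. *)
Definition word := nat -> sym.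

(* Configuration (q, l, r): l = l_0 l_{-1} ..., r = r_0 r_1 ..., head on r_0. *)
Record config := mkConfig { cq : nat; cl : word; cr : word }.

Definition Next (M : TM) (C : config) : config :=
  let '(q', w, m) := delta M (cq C) (cr C 0%nat) in
  match m with
  | MoveR => mkConfig q' (fun i => match i with O => w | S j => cl C j end)
                         (fun i => cr C (S i))
  | MoveL => mkConfig q' (fun i => cl C (S i))
                         (fun i => match i with
                                   | O => cl C 0%nat
                                   | 1%nat => w
                                   | S (S j) => cr C (S j) end)
  end.

(* The word consists of symbols 1,3 possibly followed by blanks forever,
   i.e. it is a (possibly infinite) word over {1,3}. *)
Definition word13 (w : word) : Prop := forall i, w i = B0 -> w (S i) = B0.

Definition gamma_word (w : word) : R :=
  Series (fun i => symval (w i) / 4 ^ (S i)).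

Definition gamma_config (C : config) : list R :=
  [INR (cq C); gamma_word (cl C); gamma_word (cr C)].

(* binary length, with ell 0 = 1 *)
Definition ell (n : nat) : nat := S (Nat.log2 n).

Definition sgbar (x : R) : R := Rmin 1 (Rmax 0 (2 * x - / 2)).

(* Some n iff x is the natural number n *)
Definition natof (x : R) : option nat :=
  let n := Z.to_nat (up x - 1) in
  if Req_EM_T x (INR n) then Some n else None.

(* EHalf (x |-> x/2) is an extra constructor used only for the
   "essentially linear" claim about NextBar; sg-polynomial expressions
   proper are the half-free ones. *)
Inductive expr :=
| EVar (i : nat) | ECst (z : Z)
| EAdd (a b : expr) | ESub (a b : expr) | EMul (a b : expr)
| ESg (a : expr) | EHalf (a : expr).

Fixpoint eval (env : list R) (e : expr) : R :=
  match e with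
  | EVar i => nth i env 0
  | ECst z => IZR z
  | EAdd a b => eval env a + eval env b
  | ESub a b => eval env a - eval env b
  | EMul a b => eval env a * eval env b
  | ESg a => sgbar (eval env a)
  | EHalf a => eval env a / 2
  end.

Fixpoint deg (v : nat) (e : expr) : nat :=
  match e with
  | EVar i => if Nat.eqb i v then 1%nat else 0%nat
  | ECst _ => 0%nat
  | EAdd a b | ESub a b => Nat.max (deg v a) (deg v b)
  | EMul a b => (deg v a + deg v b)%nat
  | ESg _ => 0%nat
  | EHalf a => deg v a
  end.

Fixpoint halffree (e : expr) : Prop :=
  match e with
  | EVar _ | ECst _ => True
  | EAdd a b | ESub a b | EMul a b => halffree a /\ halffree b
  | ESg a => halffree a
  | EHalf _ => False
  end.

Definition deg0 (V : list nat) (e : expr) : Prop := forall v, In v V -> deg v e = 0%nat.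

(* e is essentially linear in the variables V: e = A . V + B with A, B of
   degree 0 in V (equality as functions). If sgpoly = true, e, A, B must be
   genuine sg-polynomial expressions (no EHalf). *)
Definition ess_linear (sgpoly : bool) (V : list nat) (e : expr) : Prop :=
  exists (A : list expr) (B : expr),
    length A = length V /\
    (forall a, In a A -> deg0 V a /\ (sgpoly = true -> halffree a)) /\
    deg0 V B /\
    (sgpoly = true -> halffree e /\ halffree B) /\
    forall env, eval env e =
      fold_right Rplus 0 (map (fun p => eval env (fst p) * nth (snd p) env 0) (combine A V))
      + eval env B.

Definition fn := list R -> option (list R).

Definition bindo {A B : Type} (o : option A) (f : A -> option B) : option B :=
  match o with Some a => f a | None => None end.

(* f(0,y) = g(y); f(n+1,y) = f(n,y) + (ell(n+1)-ell(n)) u(f(n,y), h(n,y), n, y);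
   variables of u: f at 0..d-1, then h, then x, then y. *)
Fixpoint ode_iter (g h : fn) (u : list expr) (n : nat) (ys : list R) : option (list R) :=
  match n with
  | O => g ys
  | S n' =>
      bindo (ode_iter g h u n' ys) (fun fv =>
      bindo (h (INR n' :: ys)) (fun hv =>
      Some (map (fun p => fst p + (INR (ell n) - INR (ell n'))
                                  * eval (fv ++ hv ++ INR n' :: ys) (snd p))
                (combine fv u))))
  end.

Definition ode_sol (g h : fn) (u : list expr) : fn := fun xs =>
  match xs with
  | [] => None
  | x :: ys => bindo (natof x) (fun n => ode_iter g h u n ys)
  end.

(* LDL n m F : F is an LDL° function with n arguments and m results *)
Inductive LDL : nat -> nat -> fn -> Prop :=
| LDL_zero : LDL 0 1 (fun _ => Some [0])
| LDL_one : LDL 0 1 (fun _ => Some [1])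
| LDL_proj n i : (i < n)%nat -> LDL n 1 (fun xs => Some [nth i xs 0])
| LDL_ell : LDL 1 1 (fun xs => bindo (natof (nth 0 xs 0)) (fun k => Some [INR (ell k)]))
| LDL_add : LDL 2 1 (fun xs => Some [nth 0 xs 0 + nth 1 xs 0])
| LDL_sub : LDL 2 1 (fun xs => Some [nth 0 xs 0 - nth 1 xs 0])
| LDL_mul : LDL 2 1 (fun xs => Some [nth 0 xs 0 * nth 1 xs 0])
| LDL_sg : LDL 1 1 (fun xs => Some [sgbar (nth 0 xs 0)])
| LDL_half : LDL 1 1 (fun xs => Some [nth 0 xs 0 / 2])
| LDL_pair n m1 m2 F G : LDL n m1 F -> LDL n m2 G ->
    LDL n (m1 + m2) (fun xs => bindo (F xs) (fun a => bindo (G xs) (fun b => Some (a ++ b))))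
| LDL_comp n k m G F : LDL n k G -> LDL k m F -> LDL n m (fun xs => bindo (G xs) F)
| LDL_ode k d e g h u : LDL k d g -> LDL (S k) e h -> length u = d ->
    (forall uj, In uj u -> ess_linear true (seq 0 d) uj) ->
    LDL (S k) d (ode_sol g h u)
| LDL_ext n m F G : LDL n m F -> (forall xs, length xs = n -> F xs = G xs) -> LDL n m G.

(* Because every non-blank symbol is 1 or 3, [gamma_word w = (w_0 + gamma_word (tail w)) / 4]
   with [gamma_word (tail w)] in [0, 1], so [4 * gamma_word w] lies in {0}, [1, 2] or [3, 4]
   according as w_0 is 0, 1 or 3, and two values of sgbar read the head symbol off exactly;
   sgbar similarly tests the state, an integer.  One machine step multiplies each encoded
   half-tape by 4 or 1/4 and adds a correction depending only on the state and the symbols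
   under and next to the head.  Hence each component of Next is [a * x + b], where the
   coefficient a and the offset b are finite case distinctions built from sgbar, of degree 0
   in the variables; such expressions are in LDL° by composition alone. *)

From Stdlib Require Import Reals List Lia Lra ZArith.
From Coquelicot Require Import Coquelicot.
(* After Coquelicot, so that [expr] is the expression type of Defs, not Coquelicot's. *)
From Pilot Require Import Defs.
Import ListNotations.
Open Scope R_scope.
(* Coquelicot loads ssreflect, which turns bullets off. *)
Set Bullet Behavior "Strict Subproofs".

Definition digit (w : word) (i : nat) : R := symval (w i) / 4 ^ S i.

Lemma symval_bounds (s : sym) : 0 <= symval s <= 3.
Proof. destruct s; simpl; lra. Qed.

Lemma digit_bounds (w : word) (i : nat) : 0 <= digit w i <= 3 / 4 * (/ 4) ^ i.
Proof.
  unfold digit. rewrite pow_inv. simpl.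
  assert (0 < 4 ^ i) by (apply pow_lt; lra).
  assert (0 < / 4 ^ i) by (apply Rinv_0_lt_compat; lra).
  pose proof (symval_bounds (w i)).
  unfold Rdiv. rewrite Rinv_mult. split; nra.
Qed.

Lemma is_series_digit_bound : is_series (fun i => 3 / 4 * (/ 4) ^ i) 1.
Proof.
  replace 1 with (3 / 4 * / (1 - / 4)) by field.
  apply (is_series_scal_l (K:=R_AbsRing) (V:=R_NormedModule)).
  apply is_series_geom. rewrite Rabs_pos_eq; lra.
Qed.

Lemma ex_series_digit (w : word) : ex_series (digit w).
Proof.
  apply (ex_series_le (K:=R_AbsRing) (V:=R_CompleteNormedModule) _ (fun i => 3 / 4 * (/ 4) ^ i)).
  - intros i. change (norm (digit w i)) with (Rabs (digit w i)).
    pose proof (digit_bounds w i). rewrite Rabs_pos_eq; lra.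
  - exact (ex_intro _ _ is_series_digit_bound).
Qed.

Lemma Series_const0 : Series (fun _ => 0) = 0.
Proof.
  rewrite (Series_ext _ (fun _ => 0 * 0)) by (intros; ring).
  rewrite Series_scal_l. ring.
Qed.

Lemma gamma_word_bounds (w : word) : 0 <= gamma_word w <= 1.
Proof.
  unfold gamma_word. fold (digit w). split.
  - rewrite <- Series_const0. apply Series_le; [|apply ex_series_digit].
    intros i. pose proof (digit_bounds w i). lra.
  - rewrite <- (is_series_unique _ _ is_series_digit_bound).
    apply Series_le; [apply digit_bounds|exact (ex_intro _ _ is_series_digit_bound)].
Qed.

Lemma gamma_word_cons (w : word) :
  gamma_word w = symval (w 0%nat) / 4 + gamma_word (fun i => w (S i)) / 4.
Proof.
  unfold gamma_word. fold (digit w). rewrite Series_incr_1 by apply ex_series_digit.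
  rewrite (Series_ext _ (fun i => / 4 * digit (fun j => w (S j)) i)).
  - rewrite Series_scal_l. unfold digit. simpl. field.
  - intros i. unfold digit. simpl. field. apply pow_nonzero. lra.
Qed.

Lemma gamma_word_blank (w : word) : (forall i, w i = B0) -> gamma_word w = 0.
Proof.
  intros Hw. rewrite <- Series_const0. apply Series_ext.
  intros i. rewrite Hw. simpl. unfold Rdiv. ring.
Qed.

Definition push (s : sym) (w : word) : word :=
  fun i => match i with O => s | S j => w j end.

Lemma gamma_word_push (s : sym) (w : word) :
  gamma_word (push s w) = symval s / 4 + gamma_word w / 4.
Proof. exact (gamma_word_cons (push s w)). Qed.

Lemma gamma_word_tail (w : word) :
  gamma_word (fun i => w (S i)) = 4 * gamma_word w - symval (w 0%nat).
Proof. rewrite (gamma_word_cons w). lra. Qed.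

Lemma gamma_config_Next_MoveR (M : TM) (C : config) (q : nat) (w : sym) :
  delta M (cq C) (cr C 0%nat) = (q, w, MoveR) ->
  gamma_config (Next M C) =
    [INR q; symval w / 4 + gamma_word (cl C) / 4;
     4 * gamma_word (cr C) - symval (cr C 0%nat)].
Proof.
  intros Hd. unfold Next. rewrite Hd. unfold gamma_config. simpl.
  change (fun i => match i with O => w | S j => cl C j end) with (push w (cl C)).
  rewrite gamma_word_push, gamma_word_tail. reflexivity.
Qed.

Lemma gamma_config_Next_MoveL (M : TM) (C : config) (q : nat) (w : sym) :
  delta M (cq C) (cr C 0%nat) = (q, w, MoveL) ->
  gamma_config (Next M C) =
    [INR q; 4 * gamma_word (cl C) - symval (cl C 0%nat);
     symval (cl C 0%nat) / 4 + gamma_word (cr C) / 4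
     + (symval w - symval (cr C 0%nat)) / 16].
Proof.
  intros Hd. unfold Next. rewrite Hd. unfold gamma_config. simpl.
  change (fun i => match i with O => cl C 0%nat | 1%nat => w | S (S j) => cr C (S j) end)
    with (push (cl C 0%nat) (push w (fun i => cr C (S i)))).
  rewrite !gamma_word_push, !gamma_word_tail.
  f_equal. f_equal. f_equal. lra.
Qed.

Lemma sgbar_1 (x : R) : 3 / 4 <= x -> sgbar x = 1.
Proof. intros; unfold sgbar, Rmin, Rmax; repeat destruct Rle_dec; lra. Qed.

Lemma sgbar_0 (x : R) : x <= 1 / 4 -> sgbar x = 0.
Proof. intros; unfold sgbar, Rmin, Rmax; repeat destruct Rle_dec; lra. Qed.

Lemma word13_blank (w : word) : word13 w -> w 0%nat = B0 -> forall i, w i = B0.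
Proof. intros Hw H0 i; induction i; auto. Qed.

Lemma sgbar_head (w : word) : word13 w ->
  sgbar (4 * gamma_word w) = (match w 0%nat with B0 => 0 | _ => 1 end) /\
  sgbar (4 * gamma_word w - 2) = (match w 0%nat with S3 => 1 | _ => 0 end).
Proof.
  intros Hw. destruct (w 0%nat) eqn:E.
  - rewrite (gamma_word_blank w (word13_blank w Hw E)). split; apply sgbar_0; lra.
  - rewrite gamma_word_cons, E. pose proof (gamma_word_bounds (fun i => w (S i))). simpl.
    split; [apply sgbar_1 | apply sgbar_0]; lra.
  - rewrite gamma_word_cons, E. pose proof (gamma_word_bounds (fun i => w (S i))). simpl.
    split; apply sgbar_1; lra.
Qed.

Definition head_nonblank (v : nat) : expr := ESg (EMul (ECst 4) (EVar v)).
Definition head_is3 (v : nat) : expr := ESg (ESub (EMul (ECst 4) (EVar v)) (ECst 2)).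

Definition head_symval (v : nat) : expr := EAdd (head_nonblank v) (EMul (ECst 2) (head_is3 v)).

Definition case_head (v : nat) (G : sym -> expr) : expr :=
  EAdd (EMul (ESub (ECst 1) (head_nonblank v)) (G B0))
       (EAdd (EMul (ESub (head_nonblank v) (head_is3 v)) (G S1))
             (EMul (head_is3 v) (G S3))).

Lemma eval_head_symval (env : list R) (v : nat) (w : word) :
  nth v env 0 = gamma_word w -> word13 w -> eval env (head_symval v) = symval (w 0%nat).
Proof.
  intros Ev Hw. destruct (sgbar_head w Hw) as [Hnb H3].
  simpl. rewrite Ev, Hnb, H3. destruct (w 0%nat); simpl; ring.
Qed.

Lemma eval_case_head (env : list R) (v : nat) (w : word) (G : sym -> expr) :
  nth v env 0 = gamma_word w -> word13 w -> eval env (case_head v G) = eval env (G (w 0%nat)).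
Proof.
  intros Ev Hw. destruct (sgbar_head w Hw) as [Hnb H3].
  simpl. rewrite Ev, Hnb, H3. destruct (w 0%nat); ring.
Qed.

Definition state_is (v k : nat) : expr :=
  ESub (ESg (EAdd (ESub (EVar v) (ECst (Z.of_nat k))) (ECst 1)))
       (ESg (ESub (EVar v) (ECst (Z.of_nat k)))).

Lemma eval_state_is (env : list R) (v q k : nat) :
  nth v env 0 = INR q -> eval env (state_is v k) = if Nat.eqb q k then 1 else 0.
Proof.
  intros Ev. simpl. rewrite Ev, <- INR_IZR_INZ.
  destruct (Nat.eqb_spec q k) as [<-|Hne].
  - rewrite sgbar_1, sgbar_0; lra.
  - destruct (Nat.lt_ge_cases q k) as [Hlt|Hge].
    + assert (INR (S q) <= INR k) by (apply le_INR; lia). rewrite S_INR in *.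
      rewrite sgbar_0, sgbar_0; lra.
    + assert (INR (S k) <= INR q) by (apply le_INR; lia). rewrite S_INR in *.
      rewrite sgbar_1, sgbar_1; lra.
Qed.

Fixpoint select (vq vw N : nat) (F : nat -> sym -> expr) : expr :=
  match N with
  | O => ECst 0
  | S k => EAdd (select vq vw k F) (EMul (state_is vq k) (case_head vw (F k)))
  end.

Lemma eval_select (env : list R) (vq vw q : nat) (w : word) (N : nat) (F : nat -> sym -> expr) :
  nth vq env 0 = INR q -> nth vw env 0 = gamma_word w -> word13 w ->
  eval env (select vq vw N F) = if Nat.ltb q N then eval env (F q (w 0%nat)) else 0.
Proof.
  intros Eq Ew Hw. induction N as [|N IH]; [destruct q; reflexivity|].
  change (eval env (select vq vw N F) + eval env (state_is vq N) * eval env (case_head vw (F N))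
          = if Nat.ltb q (S N) then eval env (F q (w 0%nat)) else 0).
  rewrite IH, (eval_state_is env vq q N Eq), (eval_case_head env vw w _ Ew Hw).
  destruct (Nat.ltb_spec q N), (Nat.eqb_spec q N), (Nat.ltb_spec q (S N)); subst; try lia; ring.
Qed.

Fixpoint sg_guarded (e : expr) : Prop :=
  match e with
  | EVar _ => False
  | ECst _ | ESg _ => True
  | EAdd a b | ESub a b | EMul a b => sg_guarded a /\ sg_guarded b
  | EHalf a => sg_guarded a
  end.

Lemma deg_sg_guarded (v : nat) (e : expr) : sg_guarded e -> deg v e = 0%nat.
Proof.
  induction e; simpl; intros He; try contradiction; try reflexivity; auto.
  all: destruct He; rewrite IHe1, IHe2 by assumption; reflexivity.
Qed.

Lemma sg_guarded_select (vq vw N : nat) (F : nat -> sym -> expr) :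
  (forall k s, sg_guarded (F k s)) -> sg_guarded (select vq vw N F).
Proof.
  intros HF. induction N as [|N IH]; simpl; [exact I|].
  repeat split; auto.
Qed.

Definition affine_in (v : nat) (a b : expr) : expr := EAdd (EMul a (EVar v)) b.

Lemma sum_single_coeff (env : list R) (V : list nat) (v : nat) (a : expr) : NoDup V ->
  fold_right Rplus 0
    (map (fun p => eval env (fst p) * nth (snd p) env 0)
         (combine (map (fun u => if Nat.eqb u v then a else ECst 0) V) V))
  = if in_dec Nat.eq_dec v V then eval env a * nth v env 0 else 0.
Proof.
  induction V as [|u V IH]; intros Hnd; [reflexivity|].
  inversion Hnd as [|? ? Hu HV]; subst. simpl. rewrite (IH HV).
  destruct (Nat.eqb_spec u v) as [<-|Hne]; destruct (Nat.eq_dec u u); try congruence;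
    destruct (in_dec Nat.eq_dec u V); try contradiction.
  - ring.
  - destruct (Nat.eq_dec u v); [congruence|]. destruct (in_dec Nat.eq_dec v V); simpl; ring.
Qed.

Lemma ess_linear_affine_in (V : list nat) (v : nat) (a b : expr) :
  NoDup V -> In v V -> sg_guarded a -> sg_guarded b -> ess_linear false V (affine_in v a b).
Proof.
  intros Hnd Hv Ha Hb.
  exists (map (fun u => if Nat.eqb u v then a else ECst 0) V), b.
  split; [apply length_map|]. split; [|split; [|split]].
  - intros c Hc. split; [|discriminate]. intros u _.
    apply in_map_iff in Hc as [x [<- _]]. destruct (Nat.eqb x v); simpl; auto using deg_sg_guarded.
  - intros u _. apply deg_sg_guarded; assumption.
  - discriminate.
  - intros env. rewrite sum_single_coeff by assumption.
    destruct (in_dec Nat.eq_dec v V); [reflexivity|contradiction].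
Qed.

Lemma natof_INR (n : nat) : natof (INR n) = Some n.
Proof.
  unfold natof.
  assert (up (INR n) = (Z.of_nat n + 1)%Z) as ->.
  { symmetry; apply tech_up; rewrite plus_IZR, <- INR_IZR_INZ; simpl; lra. }
  rewrite Z.add_simpl_r, Nat2Z.id.
  destruct Req_EM_T; [reflexivity|contradiction].
Qed.

Section LDLExpressions.

Variable n : nat.
Hypothesis n_pos : (0 < n)%nat.

Lemma LDL_binop (op : R -> R -> R) (Fop : fn) (a b : list R -> R) :
  LDL 2 1 Fop -> (forall x y, Fop [x; y] = Some [op x y]) ->
  LDL n 1 (fun xs => Some [a xs]) -> LDL n 1 (fun xs => Some [b xs]) ->
  LDL n 1 (fun xs => Some [op (a xs) (b xs)]).
Proof.
  intros Hop Eop Ha Hb.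
  eapply LDL_ext; [exact (LDL_comp _ _ _ _ _ (LDL_pair _ _ _ _ _ Ha Hb) Hop)|].
  intros xs _. apply Eop.
Qed.

(* The primitive constants have arity 0; [x - x] and [ell 0 = 1] provide them in arity [n]. *)
Lemma LDL_const0 : LDL n 1 (fun _ => Some [0]).
Proof.
  pose proof (LDL_proj n 0 n_pos) as Hx.
  eapply LDL_ext; [exact (LDL_binop Rminus _ _ _ LDL_sub (fun _ _ => eq_refl) Hx Hx)|].
  intros xs _. simpl. rewrite Rminus_diag. reflexivity.
Qed.

Lemma LDL_const1 : LDL n 1 (fun _ => Some [1]).
Proof.
  eapply LDL_ext; [exact (LDL_comp _ _ _ _ _ LDL_const0 LDL_ell)|].
  intros xs _. simpl. change 0 with (INR 0). rewrite natof_INR. reflexivity.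
Qed.

Lemma LDL_const_nat (m : nat) : LDL n 1 (fun _ => Some [INR m]).
Proof.
  induction m as [|m IH]; [exact LDL_const0|].
  eapply LDL_ext; [exact (LDL_binop Rplus _ _ _ LDL_add (fun _ _ => eq_refl) IH LDL_const1)|].
  intros xs _. rewrite S_INR. reflexivity.
Qed.

Lemma LDL_const (z : Z) : LDL n 1 (fun _ => Some [IZR z]).
Proof.
  destruct z as [|p|p]; [exact LDL_const0| |].
  - eapply LDL_ext; [exact (LDL_const_nat (Pos.to_nat p))|].
    intros xs _. rewrite INR_IZR_INZ, positive_nat_Z. reflexivity.
  - eapply LDL_ext;
      [exact (LDL_binop Rminus _ _ _ LDL_sub (fun _ _ => eq_refl) LDL_const0 (LDL_const_nat (Pos.to_nat p)))|].
    intros xs _. simpl. rewrite INR_IZR_INZ, positive_nat_Z, <- Pos2Z.opp_pos, opp_IZR.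
    f_equal. f_equal. ring.
Qed.

Lemma LDL_eval (e : expr) : LDL n 1 (fun xs => Some [eval xs e]).
Proof.
  induction e; simpl.
  - destruct (Nat.lt_ge_cases i n) as [Hi|Hi]; [exact (LDL_proj n i Hi)|].
    eapply LDL_ext; [exact LDL_const0|].
    intros xs Hl. rewrite nth_overflow by lia. reflexivity.
  - apply LDL_const.
  - exact (LDL_binop Rplus _ _ _ LDL_add (fun _ _ => eq_refl) IHe1 IHe2).
  - exact (LDL_binop Rminus _ _ _ LDL_sub (fun _ _ => eq_refl) IHe1 IHe2).
  - exact (LDL_binop Rmult _ _ _ LDL_mul (fun _ _ => eq_refl) IHe1 IHe2).
  - exact (LDL_comp _ _ _ _ _ IHe LDL_sg).
  - exact (LDL_comp _ _ _ _ _ IHe LDL_half).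
Qed.

Lemma LDL_eval_list (e : expr) (es : list expr) :
  LDL n (S (length es)) (fun xs => Some (map (eval xs) (e :: es))).
Proof.
  revert e. induction es as [|e' es IH]; intros e; [exact (LDL_eval e)|].
  eapply LDL_ext; [exact (LDL_pair _ _ _ _ _ (LDL_eval e) (IH e'))|].
  intros xs _. reflexivity.
Qed.

End LDLExpressions.

Definition symZ (s : sym) : Z := match s with B0 => 0%Z | S1 => 1%Z | S3 => 3%Z end.

Lemma IZR_symZ (s : sym) : IZR (symZ s) = symval s.
Proof. destruct s; reflexivity. Qed.

Definition quarter (e : expr) : expr := EHalf (EHalf e).

Section Machine.

Variable M : TM.

Definition next_state (k : nat) (s : sym) : expr :=
  let '(q, _, _) := delta M k s in ECst (Z.of_nat q).

Definition left_coeff (k : nat) (s : sym) : expr :=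
  let '(_, _, m) := delta M k s in
  match m with MoveR => quarter (ECst 1) | MoveL => ECst 4 end.

Definition left_offset (k : nat) (s : sym) : expr :=
  let '(_, w, m) := delta M k s in
  match m with
  | MoveR => quarter (ECst (symZ w))
  | MoveL => ESub (ECst 0) (head_symval 1)
  end.

Definition right_coeff (k : nat) (s : sym) : expr :=
  let '(_, _, m) := delta M k s in
  match m with MoveR => ECst 4 | MoveL => quarter (ECst 1) end.

Definition right_offset (k : nat) (s : sym) : expr :=
  let '(_, w, m) := delta M k s in
  match m with
  | MoveR => ECst (- symZ s)
  | MoveL => quarter (EAdd (head_symval 1) (quarter (ECst (symZ w - symZ s))))
  end.

Definition next_exprs : list expr :=
  [affine_in 0 (ECst 0) (select 0 2 (nQ M) next_state);
   affine_in 1 (select 0 2 (nQ M) left_coeff) (select 0 2 (nQ M) left_offset);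
   affine_in 2 (select 0 2 (nQ M) right_coeff) (select 0 2 (nQ M) right_offset)].

Lemma next_exprs_ess_linear (e : expr) :
  In e next_exprs -> ess_linear false [0%nat; 1%nat; 2%nat] e.
Proof.
  assert (Hnd : NoDup [0%nat; 1%nat; 2%nat]) by (repeat constructor; simpl; lia).
  assert (Hsel : forall F, (forall k s, sg_guarded (F k s)) -> sg_guarded (select 0 2 (nQ M) F))
    by (intros; apply sg_guarded_select; assumption).
  intros [<-|[<-|[<-|[]]]]; apply ess_linear_affine_in; simpl; auto; apply Hsel; intros k s;
    unfold next_state, left_coeff, left_offset, right_coeff, right_offset;
    destruct (delta M k s) as [[q w] []]; simpl; auto.
Qed.

Lemma eval_next_exprs (C : config) :
  (cq C < nQ M)%nat -> word13 (cl C) -> word13 (cr C) ->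
  map (eval (gamma_config C)) next_exprs = gamma_config (Next M C).
Proof.
  intros Hq Hl Hr.
  assert (Hsel : forall F, eval (gamma_config C) (select 0 2 (nQ M) F)
                           = eval (gamma_config C) (F (cq C) (cr C 0%nat))).
  { intros F. rewrite (eval_select _ _ _ (cq C) (cr C)) by (reflexivity || assumption).
    destruct (Nat.ltb_spec (cq C) (nQ M)); [reflexivity|lia]. }
  pose proof (eval_head_symval (gamma_config C) 1 (cl C) eq_refl Hl) as Hl0.
  unfold next_exprs, affine_in. cbn [map eval]. rewrite !Hsel.
  unfold next_state, left_coeff, left_offset, right_coeff, right_offset.
  destruct (delta M (cq C) (cr C 0%nat)) as [[q w] m] eqn:Hd.
  destruct m; [rewrite (gamma_config_Next_MoveL M C q w Hd)
              |rewrite (gamma_config_Next_MoveR M C q w Hd)];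
    unfold quarter; cbn [eval]; rewrite ?Hl0, ?minus_IZR, ?opp_IZR, !IZR_symZ, <- INR_IZR_INZ;
    cbn [gamma_config nth]; repeat (apply (f_equal2 cons); [lra|]); reflexivity.
Qed.

End Machine.

Theorem mainTheorem8 (M : TM) :
  exists NextBar : list R -> option (list R),
    LDL 3 3 NextBar /\
    (exists e1 e2 e3 : expr,
        ess_linear false [0%nat; 1%nat; 2%nat] e1 /\
        ess_linear false [0%nat; 1%nat; 2%nat] e2 /\
        ess_linear false [0%nat; 1%nat; 2%nat] e3 /\
        forall xs, length xs = 3%nat -> NextBar xs = Some [eval xs e1; eval xs e2; eval xs e3]) /\
    forall C : config,
      (cq C < nQ M)%nat -> word13 (cl C) -> word13 (cr C) ->
      NextBar (gamma_config C) = Some (gamma_config (Next M C)).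
Proof.
  exists (fun xs => Some (map (eval xs) (next_exprs M))).
  split; [|split].
  - exact (LDL_eval_list 3 (Nat.lt_0_succ 2) _ [_; _]).
  - refine (ex_intro _ _ (ex_intro _ _ (ex_intro _ _
              (conj _ (conj _ (conj _ (fun xs _ => eq_refl))))))).
    all: apply (next_exprs_ess_linear M); simpl; tauto.
  - intros C Hq Hl Hr. f_equal. apply eval_next_exprs; assumption.
Qed.
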